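(* Let $h\ge 2$ be an integer and let $O$ be a finite set of next hops with $\delta=|O|$ and probability distribution $(p_o)_{o\in O}$, with entropy $H_O=\sum_{o\in O} p_o\log_2\frac{1}{p_o}$. Let $T$ be the complete binary trie of height $h$ whose $2^h$ leaves are labeled independently with next hop $o$ with probability $p_o$, let $D$ be the DAG obtained from $T$ by trie-folding, and let $V^j_D$ be the set of nodes of $D$ at level $j$. For $1\le j\le h$ put $\beta_j=\min\{\frac{H_O}{h-j}2^h+3,\,2^{h-j},\,\delta^{2^j}\}$ (with the first term $+\infty$ for $j=h$), let $k^*\in\{1,\dots,h\}$ be a level at which $\beta_j$ attains its maximum, and suppose each node of $D$ is stored using $2(h-k^* )$ bits. Then for every level $j=1,\dots,h$ the expected number of bits needed to store the nodes of $D$ at level $j$, namely $2(h-k^* )\,E(|V^j_D|)$, is at most \[\mathcal{M}=2 H_O 2^{h} + 6h.\]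
   Context: Levels: the level of a node of $T$ is $h$ minus its distance from the root; the root has level $h$, leaves level $0$, and level $j$ has $2^{h-j}$ nodes, each the root of a subtrie of height $j$ with $2^j$ labeled leaves. Trie-folding merges nodes whose rooted subtries are identical (same structure and same leaf next-hop labels), producing a DAG $D$; the nodes of $D$ at level $j$ correspond to the distinct leaf-label strings of length $2^j$ among the $2^{h-j}$ level-$j$ subtries. Each node of $D$ stores two child pointers of $h-k^*$ bits each. *)

From HB Require Import structures.
From mathcomp Require Import all_boot all_order all_algebra.
From mathcomp Require Import reals exp.
Set Implicit Arguments. Unset Strict Implicit. Unset Printing Implicit Defensive.
Import Order.TTheory GRing.Theory Num.Theory.
Local Open Scope ring_scope.

Section TrieFolding.
Variables (R : realType) (O : finType).

Definition log2 (x : R) : R := ln x / ln 2.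

Definition entropy (p : O -> R) : R :=
  \sum_(o : O) (if p o == 0 then 0 else p o * log2 (p o)^-1).

Definition leaves (h : nat) (l : {ffun 'I_(2 ^ h) -> O}) : seq O :=
  [seq l i | i <- enum 'I_(2 ^ h)].

Definition subtrie_labels (h j : nat) (l : {ffun 'I_(2 ^ h) -> O}) (b : nat)
  : seq O := take (2 ^ j) (drop (b * 2 ^ j) (leaves l)).

(* |V^j_D| : number of nodes of the folded DAG D at level j, i.e. the number
   of distinct leaf-label strings among the 2^(h-j) level-j subtries *)
Definition nodes_at_level (h j : nat) (l : {ffun 'I_(2 ^ h) -> O}) : nat :=
  size (undup [seq subtrie_labels j l b | b <- iota 0 (2 ^ (h - j))]).

Definition labeling_prob (p : O -> R) (h : nat) (l : {ffun 'I_(2 ^ h) -> O}) : R :=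
  \prod_(i : 'I_(2 ^ h)) p (l i).

Definition expected_nodes (p : O -> R) (h j : nat) : R :=
  \sum_(l : {ffun 'I_(2 ^ h) -> O}) labeling_prob p l * (nodes_at_level j l)%:R.

Definition beta (p : O -> R) (h j : nat) : R :=
  let second_third := Num.min ((2 : R) ^+ (h - j)) ((#|O|%:R : R) ^+ (2 ^ j)) in
  if (j < h)%N then
    Num.min (entropy p / (h - j)%:R * 2 ^+ h + 3) second_third
  else second_third.

End TrieFolding.

From HB Require Import structures.
From mathcomp Require Import all_boot all_order all_algebra.
From mathcomp Require Import reals exp sequences.
From mathcomp Require Import ring lra.
Import Order.TTheory GRing.Theory Num.Theory.
Local Open Scope ring_scope.
Set Implicit Arguments. Unset Strict Implicit. Unset Printing Implicit Defensive.

(* E|V^j| is at most the number 2^(h-j) of level-j subtries and at most the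
   number δ^(2^j) of label strings of length 2^j.  For j < h, E|V^j| is at most
   the sum over all strings s of the probability that s occurs as a level-j
   subtrie, which is at most min(1, 2^(h-j) P(s)) by the union bound, P(s) being
   the probability of s.  The elementary inequality
   min(1, nP) <= nP ln(1/P) / ln n + 3P, summed over all strings, turns the
   entropy 2^j H_O of a string into H_O 2^h / (h-j) + 3.  Hence
   E|V^j| <= β_j <= β_kstar, and multiplying by 2(h - kstar) gives
   2 H_O 2^h + 6(h - kstar). *)


Lemma sum_ffun_prod (R : comNzRingType) (I O : finType) (F : I -> O -> R) :
  \sum_(f : {ffun I -> O}) \prod_i F i (f i) = \prod_i \sum_o F i o.
Proof. by rewrite bigA_distr_bigA. Qed.

Section ProductWeight.
Variables (R : realType) (O : finType) (p : O -> R).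
Hypothesis p_ge0 : forall o, 0 <= p o.
Hypothesis p_sum1 : \sum_o p o = 1.

Lemma weight_le1 o : p o <= 1.
Proof.
rewrite -p_sum1 (bigD1 o) //= lerDl; exact: sumr_ge0.
Qed.

Variable I : finType.

Lemma prod_weight_ge0 (f : {ffun I -> O}) : 0 <= \prod_i p (f i).
Proof. exact: prodr_ge0. Qed.

Lemma sum_prod_weight : \sum_(f : {ffun I -> O}) \prod_i p (f i) = 1.
Proof. by rewrite (sum_ffun_prod (fun _ => p)) big1. Qed.

Lemma sum_prod_weight_coord (i0 : I) (g : O -> R) :
  \sum_(f : {ffun I -> O}) (\prod_i p (f i)) * g (f i0) = \sum_o p o * g o.
Proof.
pose G i o := p o * (if i == i0 then g o else 1).
transitivity (\sum_(f : {ffun I -> O}) \prod_i G i (f i)).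
  apply: eq_bigr => f _; rewrite big_split /= [X in _ = _ * X](bigD1 i0) //=.
  by rewrite eqxx [X in _ * (_ * X)]big1 ?mulr1 // => i /negPf ->.
rewrite (sum_ffun_prod G) (bigD1 i0) //= [X in _ * X]big1 ?mulr1.
  by apply: eq_bigr => o _; rewrite /G eqxx.
by move=> i /negPf i_neq; under eq_bigr do rewrite /G i_neq mulr1.
Qed.

Lemma sum_prod_weight_embed (J : finType) (g : J -> I) (s : J -> O) :
  injective g ->
  \sum_(f : {ffun I -> O}) (\prod_i p (f i)) * [forall k, f (g k) == s k]%:R
    = \prod_k p (s k).
Proof.
move=> g_inj.
pose e i o := [forall k, (g k == i) ==> (o == s k)].
have eE f : [forall k, f (g k) == s k] = [forall i, e i (f i)].
  apply/forallP/forallP => [fs i|fe k].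
    by apply/forallP => k; apply/implyP => /eqP <-; exact: fs.
  by have /forallP/(_ k) := fe (g k); rewrite eqxx.
transitivity (\sum_(f : {ffun I -> O}) \prod_i (p (f i) * (e i (f i))%:R)).
  apply: eq_bigr => f _; rewrite big_split /= eE; congr (_ * _).
  case: forallP => [fe|/forallP/forallPn [i /negPf nfe]].
    by rewrite big1 // => i _; rewrite fe.
  by rewrite (bigD1 i) //= nfe mul0r.
rewrite (sum_ffun_prod (fun i o => p o * (e i o)%:R)) (bigID (mem (codom g))) /=.
rewrite [X in _ * X]big1 ?mulr1; last first.
  move=> i /negP g_i; rewrite -[RHS]p_sum1; apply: eq_bigr => o _.
  suff -> : e i o by rewrite mulr1.
  by apply/forallP => k; apply/implyP => /eqP gk; case: g_i; rewrite -gk codom_f.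
have g_uniq : uniq (codom g) by rewrite (map_inj_uniq g_inj) enum_uniq.
rewrite -(big_uniq _ g_uniq) big_map big_enum /=; apply: eq_bigr => k _.
rewrite (bigD1 (s k)) //= big1 ?addr0.
  suff -> : e (g k) (s k) by rewrite mulr1.
  by apply/forallP => k'; apply/implyP => /eqP/g_inj ->.
move=> o o_neq; suff -> : e (g k) o = false by rewrite mulr0.
by apply/negbTE/forallPn; exists k; rewrite eqxx.
Qed.

End ProductWeight.

Lemma ln_prod (R : realType) (I : finType) (F : I -> R) :
  (forall i, 0 < F i) -> ln (\prod_i F i) = \sum_i ln (F i).
Proof.
move=> F_gt0; rewrite -[RHS]expRK expR_sum; congr ln.
by apply: eq_bigr => i _; rewrite lnK // posrE.
Qed.

Section Entropy.
Variables (R : realType) (O : finType) (p : O -> R).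
Hypothesis p_ge0 : forall o, 0 <= p o.
Hypothesis p_sum1 : \sum_o p o = 1.

Lemma entropyE_ln : \sum_o p o * - ln (p o) = entropy p * ln 2.
Proof.
rewrite /entropy mulr_suml; apply: eq_bigr => o _.
have [->|p_neq0] := eqVneq (p o) 0; first by rewrite !mul0r.
have ln2_neq0 : ln (2 : R) != 0 by rewrite gt_eqF // ln_gt0 // ltr1n.
by rewrite /log2 lnV ?posrE ?lt_def ?p_neq0 ?p_ge0 // -mulrA divfK.
Qed.

Lemma entropy_ge0 : 0 <= entropy p.
Proof.
apply: sumr_ge0 => o _; case: eqP => // /eqP p_neq0.
have p_gt0 : 0 < p o by rewrite lt_def p_neq0 p_ge0.
rewrite mulr_ge0 // divr_ge0 ?ln_ge0 ?ler1n //.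
by rewrite invf_ge1 // weight_le1.
Qed.

Lemma sum_prod_weight_neg_ln (I : finType) :
  \sum_(f : {ffun I -> O}) (\prod_i p (f i)) * - ln (\prod_i p (f i))
    = #|I|%:R * (entropy p * ln 2).
Proof.
transitivity (\sum_(f : {ffun I -> O}) \sum_i (\prod_i p (f i)) * - ln (p (f i))).
  apply: eq_bigr => f _.
  have [->|P_neq0] := eqVneq (\prod_i p (f i)) 0.
    by rewrite mul0r big1 // => i _; rewrite mul0r.
  have p_gt0 i : 0 < p (f i).
    rewrite lt_def p_ge0 andbT; apply: contraNneq P_neq0 => p_eq0.
    by rewrite (bigD1 i) //= p_eq0 mul0r.
  by rewrite ln_prod // -sumrN mulr_sumr.
rewrite exchange_big /=.
under eq_bigr do rewrite (sum_prod_weight_coord p_sum1 _ (fun o => - ln (p o))).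
by rewrite entropyE_ln sumr_const mulr_natl.
Qed.

End Entropy.

Lemma inv3_le_expRN1 (R : realType) : 3^-1 <= expR (-1 : R).
Proof.
have -> : (-1 : R) = 8%:R * - 8^-1 by field.
rewrite expRM_natl; apply: (@le_trans _ _ ((1 - 8^-1) ^+ 8)).
  by rewrite -subr_ge0 !exprS expr0; lra.
by rewrite lerXn2r ?nnegrE ?expR_ge0 ?expR_ge1Dx //; lra.
Qed.

Lemma ln_le_mul_neg_ln (R : realType) (n P : R) :
  0 < P -> 1 <= n * P -> 1 <= - ln P -> ln n <= n * P * - ln P.
Proof.
move=> P_gt0 nP_ge1 a_ge1.
have nP_gt0 : 0 < n * P by lra.
have n_gt0 : 0 < n by rewrite -(pmulr_lgt0 _ P_gt0).
have b_ge0 : 0 <= ln (n * P) by exact: ln_ge0.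
have ln_nE : ln n = - ln P + ln (n * P) by rewrite lnM ?posrE //; ring.
have nP_ge : 1 + ln (n * P) <= n * P by rewrite -[X in _ <= X]lnK ?posrE // expR_ge1Dx.
rewrite ln_nE; apply: (@le_trans _ _ ((1 + ln (n * P)) * - ln P)).
  by rewrite mulrDl mul1r lerD2l ler_peMr.
by apply: ler_wpM2r => //; apply: le_trans a_ge1.
Qed.

(* The constant 3 is there because [3 > e]: if [3 P < 1] then [- ln P >= 1]. *)
Lemma min1_le_neg_ln_bound (R : realType) (n P : R) :
  0 <= P <= 1 -> 1 < n ->
  Num.min 1 (n * P) <= n * P * - ln P / ln n + 3 * P.
Proof.
move=> /andP [P_ge0 P_le1] n_gt1.
have ln_n_gt0 : 0 < ln n by apply: ln_gt0.
have n_gt0 : 0 < n by lra.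
have [->|P_neq0] := eqVneq P 0; first by rewrite !(mulr0, mul0r) addr0 ge_min lexx orbT.
have P_gt0 : 0 < P by rewrite lt_def P_neq0.
have ent_ge0 : 0 <= n * P * - ln P / ln n.
  by rewrite divr_ge0 ?mulr_ge0 ?oppr_ge0 ?ln_le0 //; lra.
have [nP_le1|nP_gt1] := lerP (n * P) 1.
  have ln_n_le : ln n <= - ln P.
    by rewrite -lnV ?posrE // ler_ln ?posrE ?invr_gt0 // -(ler_pM2r P_gt0) mulVf.
  have : n * P <= n * P * - ln P / ln n.
    by rewrite ler_pdivlMr // ler_wpM2l // mulr_ge0 //; lra.
  lra.
have [P_ge3|P_lt3] := lerP (3^-1) P; first lra.
have a_ge1 : 1 <= - ln P.
  rewrite lerNr -[X in _ <= X]expRK ler_ln ?posrE ?expR_gt0 //.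
  by have := @inv3_le_expRN1 R; lra.
have : 1 <= n * P * - ln P / ln n.
  by rewrite ler_pdivlMr // mul1r ln_le_mul_neg_ln //; lra.
lra.
Qed.

Section Subtries.
Variables (O : finType) (h j : nat).
Hypothesis j_le_h : (j <= h)%N.
Local Notation N := (2 ^ h)%N.
Local Notation m := (2 ^ j)%N.
Local Notation n := (2 ^ (h - j))%N.
Local Notation labeling := {ffun 'I_N -> O}.

Lemma subtrie_end_le (b : 'I_n) : (b * m + m <= N)%N.
Proof. by rewrite -mulSnr -{2}(subnK j_le_h) expnD leq_mul2r ltn_ord orbT. Qed.

Lemma subtrie_offset_lt (b : 'I_n) (k : 'I_m) : (b * m + k < N)%N.
Proof. by apply: leq_trans (subtrie_end_le b); rewrite ltn_add2l. Qed.

Definition subtrie_leaf (b : 'I_n) (k : 'I_m) : 'I_N := Ordinal (subtrie_offset_lt b k).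

Lemma subtrie_leaf_inj (b : 'I_n) : injective (subtrie_leaf b).
Proof. by move=> k k' /(congr1 val)/addnI/val_inj. Qed.

Definition subtrie (l : labeling) (b : 'I_n) : {ffun 'I_m -> O} :=
  [ffun k => l (subtrie_leaf b k)].

Lemma subtrie_labelsE (l : labeling) (b : 'I_n) :
  subtrie_labels j l b = fgraph (subtrie l b).
Proof.
have leavesE : leaves l = fgraph l by rewrite -codom_ffun.
have N_gt0 : (0 < N)%N by rewrite expn_gt0.
pose x0 := l (Ordinal N_gt0).
rewrite /subtrie_labels -(map_nth_iota x0); last first.
  rewrite leavesE size_tuple card_ord leq_subRL ?subtrie_end_le //.
  exact: leq_trans (leq_addr m _) (subtrie_end_le b).
rewrite -[X in iota X]addn0 iotaDl -val_enum_ord -!map_comp -codom_ffun.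
rewrite /codom /image_mem enumT; apply: eq_map => k /=.
by rewrite ffunE leavesE (nth_fgraph_ord x0 (subtrie_leaf b k)).
Qed.

Lemma nodes_at_levelE (l : labeling) :
  nodes_at_level j l = size (undup [seq subtrie l b | b : 'I_n]).
Proof.
rewrite /nodes_at_level -val_enum_ord -map_comp.
rewrite (eq_map (g := (fun s => tval (fgraph s)) \o subtrie l)); last first.
  exact: subtrie_labelsE.
rewrite map_comp undup_map_inj ?size_map // => s t /val_inj /(congr1 Finfun).
by rewrite !fgraphK.
Qed.

Lemma nodes_at_level_le_subtries (l : labeling) : (nodes_at_level j l <= n)%N.
Proof.
by rewrite nodes_at_levelE (leq_trans (size_undup _)) // size_map size_enum_ord.
Qed.

Lemma nodes_at_level_le_occurring (l : labeling) :
  (nodes_at_level j l <= #|[pred s | [exists b, subtrie l b == s]]|)%N.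
Proof.
rewrite nodes_at_levelE cardE uniq_leq_size ?undup_uniq // => s.
by rewrite mem_undup mem_enum => /mapP [b _ ->]; apply/existsP; exists b.
Qed.

Lemma nodes_at_level_le_strings (l : labeling) : (nodes_at_level j l <= #|O| ^ m)%N.
Proof.
apply: leq_trans (nodes_at_level_le_occurring l) _.
by rewrite (leq_trans (max_card _)) // card_ffun card_ord.
Qed.

End Subtries.

Section ExpectedNodes.
Variables (R : realType) (O : finType) (p : O -> R) (h j : nat).
Hypothesis p_ge0 : forall o, 0 <= p o.
Hypothesis p_sum1 : \sum_o p o = 1.
Hypothesis j_le_h : (j <= h)%N.
Local Notation N := (2 ^ h)%N.
Local Notation m := (2 ^ j)%N.
Local Notation n := (2 ^ (h - j))%N.
Local Notation labeling := {ffun 'I_N -> O}.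
Local Notation subtrie := (subtrie j_le_h).

Lemma expected_nodes_le (c : R) :
  (forall l : labeling, (nodes_at_level j l)%:R <= c) -> expected_nodes p h j <= c.
Proof.
move=> nodes_le; apply: le_trans (_ : \sum_(l : labeling) labeling_prob p l * c <= _).
  by apply: ler_sum => l _; rewrite ler_wpM2l ?prod_weight_ge0.
by rewrite -mulr_suml sum_prod_weight // mul1r.
Qed.

Lemma expected_nodes_le_subtries : expected_nodes p h j <= 2 ^+ (h - j).
Proof.
by apply: expected_nodes_le => l; rewrite -natrX ler_nat nodes_at_level_le_subtries.
Qed.

Lemma expected_nodes_le_strings : expected_nodes p h j <= #|O|%:R ^+ m.
Proof.
by apply: expected_nodes_le => l; rewrite -natrX ler_nat nodes_at_level_le_strings.
Qed.

Definition occurrence_prob (s : {ffun 'I_m -> O}) : R :=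
  \sum_(l : labeling) labeling_prob p l * [exists b, subtrie l b == s]%:R.

Lemma expected_nodes_le_sum_occurrence : expected_nodes p h j <= \sum_s occurrence_prob s.
Proof.
rewrite /occurrence_prob exchange_big /=; apply: ler_sum => l _.
rewrite -mulr_sumr ler_wpM2l ?prod_weight_ge0 //.
apply: le_trans (_ : #|[pred s | [exists b, subtrie l b == s]]|%:R <= _).
  by rewrite ler_nat nodes_at_level_le_occurring.
by rewrite -sum1_card natr_sum big_mkcond; apply: ler_sum => s _; rewrite inE; case: ifP.
Qed.

Lemma occurrence_prob_le1 s : occurrence_prob s <= 1.
Proof.
apply: le_trans (_ : \sum_(l : labeling) labeling_prob p l * 1 <= _).
  by apply: ler_sum => l _; rewrite ler_wpM2l ?prod_weight_ge0 // lern1 leq_b1.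
by rewrite -mulr_suml sum_prod_weight // mul1r.
Qed.

Lemma prob_subtrie_eq (b : 'I_n) (s : {ffun 'I_m -> O}) :
  \sum_(l : labeling) labeling_prob p l * (subtrie l b == s)%:R = \prod_k p (s k).
Proof.
rewrite -(sum_prod_weight_embed p_sum1 s (@subtrie_leaf_inj _ _ j_le_h b)).
apply: eq_bigr => l _; congr (_ * (nat_of_bool _)%:R).
apply/idP/forallP => [/eqP <- k|l_eq]; first by rewrite ffunE.
by apply/eqP/ffunP => k; rewrite ffunE; apply/eqP.
Qed.

Lemma occurrence_prob_le_union s : occurrence_prob s <= n%:R * \prod_k p (s k).
Proof.
apply: le_trans (_ : \sum_(l : labeling) labeling_prob p l *
                        \sum_b (subtrie l b == s)%:R <= _).
  apply: ler_sum => l _; rewrite ler_wpM2l ?prod_weight_ge0 //.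
  case: existsP => [[b sub_eq]|_]; last exact: sumr_ge0.
  by rewrite (bigD1 b) //= sub_eq lerDl sumr_ge0.
rewrite (eq_bigr (fun l => \sum_b labeling_prob p l * (subtrie l b == s)%:R)); last first.
  by move=> l _; rewrite mulr_sumr.
rewrite exchange_big /=.
under eq_bigr do rewrite prob_subtrie_eq.
by rewrite sumr_const card_ord mulr_natl.
Qed.

Lemma expected_nodes_le_entropy : (j < h)%N ->
  expected_nodes p h j <= entropy p / (h - j)%:R * 2 ^+ h + 3.
Proof.
move=> j_lt_h; pose nn : R := n%:R; pose P (s : {ffun 'I_m -> O}) := \prod_k p (s k).
have nn_gt1 : 1 < nn by rewrite ltr1n -[1%N](expn0 2) ltn_exp2l // subn_gt0.
have ln2_neq0 : ln (2 : R) != 0 by rewrite gt_eqF // ln_gt0 // ltr1n.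
have hj_neq0 : (h - j)%:R != 0 :> R by rewrite pnatr_eq0 subn_eq0 -ltnNge.
have ln_nnE : ln nn = (h - j)%:R * ln 2 by rewrite /nn natrX lnXn ?ltr0n // mulr_natl.
have two_hE : 2 ^+ h = nn * m%:R :> R by rewrite -natrM -expnD subnK // natrX.
apply: le_trans expected_nodes_le_sum_occurrence _.
apply: le_trans (_ : \sum_s (nn * P s * - ln (P s) / ln nn + 3 * P s) <= _).
  apply: ler_sum => s _; apply: le_trans (min1_le_neg_ln_bound _ nn_gt1).
    by rewrite le_min occurrence_prob_le1 occurrence_prob_le_union.
  by rewrite prodr_ge0 // prodr_ile1 // => k _; rewrite p_ge0 weight_le1.
rewrite big_split /= -mulr_sumr sum_prod_weight // mulr1 lerD2r.
have -> : \sum_s nn * P s * - ln (P s) / ln nn = nn / ln nn * \sum_s P s * - ln (P s).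
  by rewrite mulr_sumr; apply: eq_bigr => s _; ring.
rewrite sum_prod_weight_neg_ln // card_ord ln_nnE two_hE le_eqVlt; apply/orP; left.
by apply/eqP; field; rewrite ln2_neq0 hj_neq0.
Qed.

End ExpectedNodes.

Lemma expected_nodes_le_beta (R : realType) (O : finType) (p : O -> R) (h j : nat) :
  (forall o, 0 <= p o) -> \sum_o p o = 1 -> (j <= h)%N ->
  expected_nodes p h j <= beta p h j.
Proof.
move=> p_ge0 p_sum1 j_le_h.
have E_le_min : expected_nodes p h j <= Num.min (2 ^+ (h - j)) (#|O|%:R ^+ (2 ^ j)).
  by rewrite le_min expected_nodes_le_subtries ?expected_nodes_le_strings.
by rewrite /beta /=; case: ifP => // j_lt_h; rewrite le_min expected_nodes_le_entropy.
Qed.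

Unset Implicit Arguments.

Theorem corollary1 (R : realType) (O : finType) (p : O -> R) (h kstar : nat) :
  (2 <= h)%N ->
  (forall o, 0 <= p o) -> \sum_(o : O) p o = 1 ->
  (1 <= kstar <= h)%N ->
  (forall j, (1 <= j <= h)%N -> beta p h j <= beta p h kstar) ->
  forall j, (1 <= j <= h)%N ->
    2 * (h - kstar)%:R * expected_nodes p h j
      <= 2 * entropy p * 2 ^+ h + 6 * h%:R.
Proof.
move=> _ p_ge0 p_sum1 /andP [_ k_le_h] beta_le j j_range.
have bound_ge0 : 0 <= 2 * entropy p * 2 ^+ h + 6 * h%:R.
  by rewrite addr_ge0 ?mulr_ge0 ?exprn_ge0 ?entropy_ge0.
have [k_ge_h|k_lt_h] := leqP h kstar.
  by rewrite (eqP (_ : h - kstar == 0)%N) ?subn_eq0 // mulr0 mul0r.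
have hk_gt0 : 0 < (h - kstar)%:R :> R by rewrite ltr0n subn_gt0.
have E_le : expected_nodes p h j <= entropy p / (h - kstar)%:R * 2 ^+ h + 3.
  have /andP [_ j_le_h] := j_range.
  apply: le_trans (expected_nodes_le_beta p_ge0 p_sum1 j_le_h) _.
  by apply: le_trans (beta_le j j_range) _; rewrite /beta k_lt_h ge_min lexx.
have hk_le_h : (h - kstar)%:R <= h%:R :> R by rewrite ler_nat leq_subr.
apply: le_trans (_ : 2 * (h - kstar)%:R * (entropy p / (h - kstar)%:R * 2 ^+ h + 3) <= _).
  by apply: ler_wpM2l => //; rewrite mulr_ge0 // ltW.
have -> : 2 * (h - kstar)%:R * (entropy p / (h - kstar)%:R * 2 ^+ h + 3)
          = 2 * entropy p * 2 ^+ h + 6 * (h - kstar)%:R :> R.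
  by field; rewrite gt_eqF.
lra.
Qed.
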